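(* Let $(E,C)$ be a finite bipartite separated graph. If $(E,C)$ has the Linking Property, then $\theta^{(E,C)}$ is topologically transitive. If $\Omega(E,C)$ is a Cantor space (has no isolated points), the converse also holds.
   Context: Separated graph $(E,C)$: $E=(E^0,E^1,r,s)$, $C=\bigsqcup_vC_v$ with $C_v$ a partition of $r^{-1}(v)$ into non-empty sets; $X_e$ is the element of $C$ containing $e$. Finite bipartite: $E$ finite, $E^0=E^{0,0}\sqcup E^{0,1}$, $s(E^1)=E^{0,1}$, $r(E^1)=E^{0,0}$. Admissible paths: words $\sigma_m\cdots\sigma_1$ in $E^1\sqcup(E^1)^{-1}$ forming a path in the double graph ($e^{-1}$ goes from $r(e)$ to $s(e)$; paths are read right to left) with no subword $ef^{-1}$ with $e=f$ and no subword $e^{-1}f$ with $X_e=X_f$; vertices are trivial admissible paths. $\mathfrak t_d(\alpha)$ denotes the terminal (leftmost) letter of a non-trivial admissible path. Configuration space: $\mathbb F$ = free group on $E^1$; $\Omega(E,C)$ = set of $\xi\subseteq\mathbb F$ with $1\in\xi$, right-convex (if a reduced word $e_m^{\varepsilon_m}\cdots e_1^{\varepsilon_1}\in\xi$ then $e_k^{\varepsilon_k}\cdots e_1^{\varepsilon_1}\in\xi$ for $k<m$), and such that for every $\alpha\in\xi$ the set $\xi_\alpha=\{\sigma:\sigma\alpha\in\xi\}$ equals $s^{-1}(v)$ for some $v\in E^{0,1}$ or $\{e_X^{-1}:X\in C_v\}$ for some $v\in E^{0,0}$, $e_X\in X$; topology from $\{0,1\}^{\mathbb F}$; $\theta^{(E,C)}$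 has domains $\Omega(E,C)_\alpha=\{\xi:\alpha^{-1}\in\xi\}$ and $\theta_\alpha(\xi)=\xi\alpha^{-1}$. Balls: for $n\ge1$, $\xi^n=\{\alpha\in\xi:|\alpha|\le n\}$, $\mathcal B_n(\Omega(E,C))=\{\xi^n:\xi\in\Omega(E,C)\}$, $\mathcal B(\Omega(E,C))=\bigcup_{n\ge1}\mathcal B_n$. The boundary of a ball $B$ is $\partial B=\{\mathfrak t_d(\alpha):\alpha\in B\text{ maximal}\}$, where $\alpha\in B$ is maximal if there is no $\sigma$ with $\sigma\alpha\in B$ and $|\sigma\alpha|>|\alpha|$. Two sets $A,A'\subseteq E^1\cup(E^1)^{-1}$ can be linked if there are $\sigma\in A$, $\sigma'\in A'$ and an admissible path $\alpha$ (possibly trivial) such that the concatenation $\sigma^{-1}\alpha\sigma'$ (without cancellation) is an admissible path. $(E,C)$ has the Linking Property if $\partial B$ and $\partial B'$ can be linked for any two balls $B,B'\in\mathcal B(\Omega(E,C))$. A partial action $\theta\colon G\curvearrowright\Omega$ (with $\Omega_g$ the domain of $\theta_{g^{-1}}$) is topologically transitive if for any non-empty open $U,U'\subseteq\Omega$ there is $g\in G$ with $\theta_g(U\cap\Omega_{g^{-1}})\cap U'\ne\emptyset$. *)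

From mathcomp Require Import all_boot.
Set Implicit Arguments. Unset Strict Implicit. Unset Printing Implicit Defensive.

(* A separated graph (E,C): finite vertex type, finite edge type, source and
   range maps, and C given as a family of sets of edges (global partition of
   E^1 whose blocks lie in single fibres r^{-1}(v); see lemma9's hypotheses). *)
Record sgraph := SGraph {
  vtx : finType;
  edg : finType;
  src : edg -> vtx;
  rng : edg -> vtx;
  sep : {set {set edg}} }.

Section SG.
Variable G : sgraph.

(* letters of E^1 ⊔ (E^1)^{-1}: (e,false) = e, (e,true) = e^{-1} *)
Definition letter := (edg G * bool)%type.
(* words are stored in written order: [:: s_m; ...; s_1] represents s_m ... s_1 *)
Definition word := seq letter.

Definition flip (x : letter) : letter := (x.1, ~~ x.2).
Definition invw (w : word) : word := rev (map flip w).

Definition cons_red (x : letter) (w : word) : word :=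
  match w with
  | y :: w' => if y == flip x then w' else x :: w
  | [::] => [:: x]
  end.
Definition red (w : word) : word := foldr cons_red [::] w.
Definition mulw (a b : word) : word := red (a ++ b).

Definition reduced (w : word) : bool :=
  if w is x :: w' then path (fun x y => y != flip x) x w' else true.

Definition Cv (v : vtx G) : {set {set edg G}} :=
  [set X in sep G | X \subset [set e | rng e == v]].

Definition lsrc (x : letter) : vtx G := if x.2 then rng x.1 else src x.1.
Definition ltgt (x : letter) : vtx G := if x.2 then src x.1 else rng x.1.

(* x immediately to the left of y (paths are read right to left) *)
Definition adm_adj (x y : letter) : bool :=
  [&& lsrc x == ltgt y,
      ~~ [&& x.2 == false, y.2 == true & x.1 == y.1]
    & ~~ [&& x.2 == true, y.2 == false & pblock (sep G) x.1 == pblock (sep G) y.1]].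

(* non-trivial admissible paths (trivial ones are the vertices) *)
Definition admissible (w : word) : bool :=
  if w is x :: w' then path adm_adj x w' else false.

(* terminal (leftmost) letter *)
Definition td (x : letter) (w : word) : letter := head x w.

Section Omega.
Variable V0 : {set vtx G}.   (* E^{0,0}; E^{0,1} = ~: V0 *)

Definition config := word -> bool.

(* ξ_α = {σ : σα ∈ ξ} is s^{-1}(v) for some v ∈ E^{0,1}, or
   {e_X^{-1} : X ∈ C_v} for some v ∈ E^{0,0} and some choice e_X ∈ X *)
Definition local_ok (xi : config) (a : word) : Prop :=
  exists v : vtx G,
    (v \notin V0 /\
       forall sg : letter, xi (mulw [:: sg] a) = (sg.2 == false) && (src sg.1 == v))
    \/
    (v \in V0 /\
       exists S : {set edg G},
         (forall sg : letter, xi (mulw [:: sg] a) = (sg.2 == true) && (sg.1 \in S)) /\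
         S \subset [set e | rng e == v] /\
         (forall X, X \in Cv v -> #|S :&: X| = 1)).

Definition inOmega (xi : config) : Prop :=
  [/\ xi [::],
      (forall w, xi w -> reduced w),
      (forall w k, xi w -> xi (drop k w))
    & (forall a, xi a -> local_ok xi a)].

(* partial action: θ_α(ξ) = ξ α^{-1} = {γ : γα ∈ ξ}, defined when α ∈ ξ *)
Definition theta (a : word) (xi : config) : config :=
  fun g => reduced g && xi (mulw g a).

(* open subsets of Ω(E,C) for the topology induced from {0,1}^F *)
Definition Oopen (U : config -> Prop) : Prop :=
  (forall xi, U xi -> inOmega xi) /\
  (forall xi, U xi -> exists F : seq word,
     forall eta, inOmega eta -> (forall w, w \in F -> eta w = xi w) -> U eta).

Definition top_transitive : Prop :=
  forall U U' : config -> Prop, Oopen U -> Oopen U' ->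
    (exists xi, U xi) -> (exists xi, U' xi) ->
    exists (a : word) (xi : config), [/\ U xi, xi a & U' (theta a xi)].

Definition isolated (xi : config) : Prop :=
  inOmega xi /\ Oopen (fun eta => inOmega eta /\ eta =1 xi).

Definition ball (xi : config) (n : nat) : config :=
  fun a => xi a && (size a <= n).

Definition is_ball (B : config) : Prop :=
  exists (xi : config) (n : nat), [/\ inOmega xi, 1 <= n & B =1 ball xi n].

Definition maximal (B : config) (a : word) : Prop :=
  ~ exists sg : letter, B (mulw [:: sg] a) /\ size a < size (mulw [:: sg] a).

Definition boundary (B : config) (sg : letter) : Prop :=
  exists a : word, [/\ B a, maximal B a, a != [::] & td sg a = sg].

Definition linkable (A A' : letter -> Prop) : Prop :=
  exists (sg sg' : letter) (a : word),
    [/\ A sg, A' sg' & admissible (flip sg :: a ++ [:: sg'])].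

Definition linking_property : Prop :=
  forall B B', is_ball B -> is_ball B' -> linkable (boundary B) (boundary B').

End Omega.
End SG.

(* Basic open sets around xi and xi' are
   determined by words of length at most n.  The Linking Property for the balls
   of radius n of xi and xi' gives maximal words sigma p in xi and sigma' p' in
   xi', both of length n, and an admissible path sigma^-1 alpha sigma'.  Gluing
   xi, the configuration spanned by this path and a translate of xi' yields a
   configuration eta agreeing with xi up to length n, together with kappa in eta
   such that theta_kappa(eta) agrees with xi' up to length n.

   Perturb the
   centre xi of the first ball to zeta, far from every theta_b(xi') with
   |b| < n + n'.  The word alpha that transitivity provides for neighbourhoods of
   zeta and xi' then has length at least n + n', and alpha^-1, an element of
   theta_alpha(eta), is admissible; cutting off its first n and last n' letters
   exhibits boundary letters of the two balls linked by the remaining segment. *)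

From mathcomp Require Import all_boot.
From Stdlib Require Import Classical Lia.
From mathcomp Require Import zify.
Set Implicit Arguments. Unset Strict Implicit. Unset Printing Implicit Defensive.

Lemma card1_eq (T : finType) (A : {set T}) (a b : T) :
  #|A| = 1 -> a \in A -> b \in A -> a = b.
Proof. by move/eqP/cards1P => [c ->]; rewrite !inE => /eqP -> /eqP ->. Qed.

Section FreeGroup.
Variable G : sgraph.
Implicit Types (x y : letter G) (w u v a c p : word G).

Lemma flipK : involutive (@flip G).
Proof. by case=> e b; rewrite /flip /= negbK. Qed.

Lemma flip_eq_sym x y : (y == flip x) = (x == flip y).
Proof. by apply/eqP/eqP => ->; rewrite flipK. Qed.

Lemma reduced_cons x w :
  reduced (x :: w) = reduced w && (if w is y :: _ then y != flip x else true).
Proof. by case: w => [|y w] //=; rewrite andbC. Qed.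

Lemma reduced_behead x w : reduced (x :: w) -> reduced w.
Proof. by rewrite reduced_cons => /andP[]. Qed.

Lemma reduced_cons_red x w : reduced w -> reduced (cons_red x w).
Proof.
case: w => [|y w] //= Hw; case: ifP => [_|/negbT hy].
- by case: w Hw => //= z w /andP[].
- by rewrite /= hy.
Qed.

Lemma reduced_red w : reduced (red w).
Proof. by elim: w => //= x w IH; apply: reduced_cons_red. Qed.

Lemma red_id w : reduced w -> red w = w.
Proof.
elim: w => [//|x w IH] Hxw /=; rewrite IH ?(reduced_behead Hxw) //.
by case: w Hxw {IH} => //= y w /andP[/negbTE ->].
Qed.

Lemma red_idem w : red (red w) = red w.
Proof. exact/red_id/reduced_red. Qed.

Lemma cons_redK x w : reduced w -> cons_red (flip x) (cons_red x w) = w.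
Proof.
case: w => [|y w] /= Hw; first by rewrite flipK eqxx.
case: ifP => [/eqP Ey|_]; last by rewrite /= flipK eqxx.
case: w Hw => [|z w] /=; first by rewrite Ey.
by move=> /andP[hz _]; rewrite Ey flipK in hz *; rewrite (negbTE hz).
Qed.

Lemma mulw_letter x a : reduced a -> mulw [:: x] a = cons_red x a.
Proof. by move=> Ha; rewrite /mulw /= red_id. Qed.

Lemma red_cat u v : red (u ++ v) = foldr (@cons_red G) (red v) u.
Proof. by rewrite /red foldr_cat. Qed.

Lemma reduced_foldr_cons_red r u : reduced r -> reduced (foldr (@cons_red G) r u).
Proof. by move=> Hr; elim: u => //= x u IH; apply: reduced_cons_red. Qed.

Lemma foldr_cons_red x s r : reduced s -> reduced r ->
  foldr (@cons_red G) r (cons_red x s) = cons_red x (foldr (@cons_red G) r s).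
Proof.
case: s => [|y s] Hs Hr //=; case: ifP => [/eqP ->|_] //=.
by rewrite -{1}(flipK x) cons_redK // reduced_foldr_cons_red // (reduced_behead Hs).
Qed.

Lemma foldr_cons_red_red r u : reduced r ->
  foldr (@cons_red G) r (red u) = foldr (@cons_red G) r u.
Proof.
by move=> Hr; elim: u => //= x u IH; rewrite foldr_cons_red ?reduced_red // IH.
Qed.

Lemma red_redl u v : red (red u ++ v) = red (u ++ v).
Proof. by rewrite !red_cat foldr_cons_red_red // reduced_red. Qed.

Lemma red_redr u v : red (u ++ red v) = red (u ++ v).
Proof. by rewrite !red_cat red_idem. Qed.

Lemma size_red w : size (red w) <= size w.
Proof.
elim: w => //= x w IH; rewrite -ltnS in IH; apply: leq_trans IH.
by case: (red w) => [|y r] //=; case: ifP => //= _; apply: leqW.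
Qed.

Lemma invw_cons x w : invw (x :: w) = invw w ++ [:: flip x].
Proof. by rewrite /invw /= rev_cons cats1. Qed.

Lemma invwK : involutive (@invw G).
Proof. by move=> w; rewrite /invw map_rev revK (mapK flipK). Qed.

Lemma invw_inj : injective (@invw G).
Proof. exact: can_inj invwK. Qed.

Lemma invw_cat u v : invw (u ++ v) = invw v ++ invw u.
Proof. by rewrite /invw map_cat rev_cat. Qed.

Lemma size_invw w : size (invw w) = size w.
Proof. by rewrite /invw size_rev size_map. Qed.

Lemma last_invw x w : last x (invw w) = if w is y :: _ then flip y else x.
Proof. by case: w => [|y w] //=; rewrite invw_cons cats1 last_rcons. Qed.

Lemma reduced_rcons s x :
  reduced (rcons s x) = reduced s && (if s is _ :: _ then x != flip (last x s) else true).
Proof. by case: s => [|y s] //=; rewrite /reduced rcons_path. Qed.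

Lemma reduced_invw w : reduced w -> reduced (invw w).
Proof.
elim: w => [|x w IH] // Hxw; rewrite invw_cons cats1 reduced_rcons IH ?(reduced_behead Hxw) //=.
case Ew: (invw w) => [|z s] //; rewrite -Ew last_invw.
by case: w Hxw Ew {IH} => // y w /andP[hy _] _; rewrite flipK eq_sym.
Qed.

Lemma red_invwl p v : red (invw p ++ p ++ v) = red v.
Proof.
elim: p => [|x p IH] //=.
by rewrite invw_cons -catA /= -red_redr /= cons_redK ?reduced_red // red_redr.
Qed.

Lemma red_cat_invwl u p v : red (u ++ invw p ++ p ++ v) = red (u ++ v).
Proof. by rewrite -red_redr red_invwl red_redr. Qed.

Lemma red_cat_invwr u p v : red (u ++ p ++ invw p ++ v) = red (u ++ v).
Proof. by rewrite -{1}(invwK p) red_cat_invwl. Qed.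

Lemma mulw_cat u v w : mulw (mulw u v) w = mulw u (v ++ w).
Proof. by rewrite /mulw red_redl catA. Qed.

Lemma mulwA u v w : mulw (mulw u v) w = mulw u (mulw v w).
Proof. by rewrite mulw_cat /mulw red_redr. Qed.

Lemma red_cat_reduced a c : reduced a -> reduced c ->
  exists a1 t c1, [/\ a = a1 ++ t, c = invw t ++ c1 & red (a ++ c) = a1 ++ c1].
Proof.
move=> + Hc; elim: a => [|x a IH] Hxa; first by exists [::], [::], c; rewrite red_id.
have [a1 [t [c1 [Ea -> E]]]] := IH (reduced_behead Hxa); subst a; rewrite /= E {IH}.
case: a1 Hxa E => [|y a1] Hxa E; last first.
  move: Hxa => /= /andP[hy _]; rewrite (negbTE hy).
  by exists [:: x, y & a1], t, c1.
case: c1 E => [|z c1] E /=; first by exists [:: x], t, [::].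
case: ifP => [/eqP Ez|_]; last by exists [:: x], t, (z :: c1).
by exists [::], (x :: t), c1; rewrite invw_cons -catA Ez.
Qed.

End FreeGroup.

Section AdmissiblePaths.
Variable G : sgraph.
Implicit Types (x y : letter G) (w u v : word G).

Lemma adm_adj_neq_flip x y : adm_adj x y -> y != flip x.
Proof.
case: x y => e b [f c]; rewrite /adm_adj /flip /=.
case/and3P => _ H1 H2; apply/eqP; case=> Ef Ec; subst f c.
by case: b H1 H2; rewrite /= eqxx.
Qed.

Lemma adm_adj_flip x y : adm_adj x y = adm_adj (flip y) (flip x).
Proof.
case: x y => e b [f c]; rewrite /adm_adj /flip /lsrc /ltgt /=.
by case: b; case: c; rewrite /= ?(eq_sym (rng e)) ?(eq_sym (src e)) ?(eq_sym e)
  ?(eq_sym (pblock _ e)).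
Qed.

Lemma admissible_reduced w : admissible w -> reduced w.
Proof. by case: w => [|x w] //=; apply: sub_path => y z /adm_adj_neq_flip. Qed.

Lemma admissible_infix u v w : v != [::] -> admissible (u ++ v ++ w) -> admissible v.
Proof.
case: v => [|y v] // _; case: u => [|x u] /=; first by rewrite cat_path => /andP[].
by rewrite cat_path => /andP[_] /= /andP[_]; rewrite cat_path => /andP[].
Qed.

Lemma admissible_link_ends x y (s : word G) :
  admissible (flip x :: s ++ [:: y]) ->
  adm_adj (flip (head y s)) x /\ adm_adj (last (flip x) s) y.
Proof.
rewrite /= cat_path /= andbT => /andP[Hs Hy]; split=> //.
case: s Hs Hy => [|z s] /= => [_|/andP[+ _] _]; by rewrite adm_adj_flip flipK.
Qed.

Lemma admissible_link_segment x u m v : u != [::] -> v != [::] ->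
  admissible (u ++ m ++ v) -> admissible (last x u :: m ++ [:: head x v]).
Proof.
case/lastP: u => [|u l] // _; case: v => [|h v] // _.
rewrite last_rcons -cats1 -!catA /= => Hadm.
apply: (@admissible_infix u (l :: m ++ [:: h]) v) => //.
by rewrite /= -catA.
Qed.

End AdmissiblePaths.

Section Configurations.
Variable G : sgraph.
Variable V0 : {set vtx G}.
Hypothesis HC : partition (sep G) [set: edg G].
Hypothesis HCr : forall X, X \in sep G -> forall e f, e \in X -> f \in X -> rng e = rng f.
Hypothesis Hs : [set src x | x : edg G] = ~: V0.
Hypothesis Hr : [set rng x | x : edg G] = V0.
Implicit Types (x y h : letter G) (w u a p : word G) (xi : config G).

Lemma rng_in_V0 e : rng e \in V0.
Proof. by rewrite -Hr; apply/imsetP; exists e. Qed.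

Lemma src_in_V0 e : (src e \in V0) = false.
Proof.
have : src e \in ~: V0 by rewrite -Hs; apply/imsetP; exists e.
by rewrite inE => /negbTE.
Qed.

Lemma rng_eq_src (e f : edg G) : (rng e == src f) = false.
Proof. by apply/negbTE/eqP => E; have := rng_in_V0 e; rewrite E src_in_V0. Qed.

Lemma mem_pblock_sep e : e \in pblock (sep G) e.
Proof. by case/and3P: HC => /eqP Hcov _ _; rewrite mem_pblock Hcov inE. Qed.

Lemma pblock_sep e : pblock (sep G) e \in sep G.
Proof. by case/and3P: HC => /eqP Hcov _ _; apply: pblock_mem; rewrite Hcov inE. Qed.

Lemma pblock_Cv e : pblock (sep G) e \in Cv (rng e).
Proof.
rewrite /Cv inE pblock_sep; apply/subsetP => f hf.
by rewrite inE (HCr (pblock_sep e) hf (mem_pblock_sep e)).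
Qed.

Lemma Cv_pblock X v e : X \in Cv v -> e \in X -> pblock (sep G) e = X /\ rng e = v.
Proof.
rewrite /Cv inE => /andP[HX /subsetP HS] He; split.
  by case/and3P: HC => _ Htriv _; apply: def_pblock Htriv HX He.
by move/HS: He; rewrite inE => /eqP.
Qed.

Lemma local_ok_ext (xi1 xi2 : config G) a b :
  (forall sg, xi1 (mulw [:: sg] a) = xi2 (mulw [:: sg] b)) ->
  local_ok V0 xi1 a -> local_ok V0 xi2 b.
Proof.
move=> E [v [[hv H]|[hv [S [H1 HS]]]]]; exists v.
- by left; split => // sg; rewrite -E.
- by right; split => //; exists S; split => // sg; rewrite -E.
Qed.

Lemma omega_reduced xi w : inOmega V0 xi -> xi w -> reduced w.
Proof. by case=> _ + _ _; apply. Qed.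

Lemma omega_behead xi x w : inOmega V0 xi -> xi (x :: w) -> xi w.
Proof. by case=> _ _ Hd _ /(Hd _ 1); rewrite /= drop0. Qed.

Lemma omega_adm_adj xi x h w : inOmega V0 xi -> xi (x :: h :: w) -> adm_adj x h.
Proof.
move=> Hxi Hx; have Hw := omega_behead Hxi Hx.
have hx : h != flip x by move: (omega_reduced Hxi Hx) => /andP[].
have Rw := omega_reduced Hxi Hw.
have Ef : xi (mulw [:: flip h] (h :: w)).
  by rewrite mulw_letter //= flipK eqxx (omega_behead Hxi Hw).
have Ex : xi (mulw [:: x] (h :: w)) by rewrite mulw_letter //= (negbTE hx).
case: Hxi Hx => _ _ _ Hloc _; case: (Hloc _ Hw) => {Hloc Hw Rw} v [[hv H]|[hv [S [H1 [H2 H3]]]]].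
- move: Ef Ex; rewrite !H {H}; case: x hx => e b; case: h => f c.
  rewrite /flip /adm_adj /lsrc /ltgt /= => hx /andP[/eqP Hc /eqP Hf] /andP[/eqP Hb /eqP He].
  move: Hc; rewrite Hb; case: c hx Hf => //= hx Hf _.
  rewrite He Hf eqxx andbT /=; apply/eqP => Eef; move: hx; by rewrite Hb Eef eqxx.
- move: Ef Ex; rewrite !H1 {H1}; case: x hx => e b; case: h => f c.
  rewrite /flip /adm_adj /lsrc /ltgt /= => hx /andP[/eqP Hc Hf] /andP[/eqP Hb He].
  move: Hc; rewrite Hb; case: c hx Hf => //= hx Hf _.
  have /subsetP HS := H2.
  have /HS := He; rewrite inE => /eqP ->.
  have /HS := Hf; rewrite inE => /eqP Hfv; rewrite Hfv eqxx /=.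
  apply/negP => /eqP Hpb.
  have Hcv : pblock (sep G) f \in Cv v by rewrite -Hfv pblock_Cv.
  have Ee : e \in S :&: pblock (sep G) f by rewrite inE He -Hpb mem_pblock_sep.
  have Ef' : f \in S :&: pblock (sep G) f by rewrite inE Hf mem_pblock_sep.
  by move: hx; rewrite Hb (card1_eq (H3 _ Hcv) Ee Ef') eqxx.
Qed.

Lemma omega_admissible xi w : inOmega V0 xi -> xi w -> w != [::] -> admissible w.
Proof.
move=> Hxi; elim: w => [|x [|h w] IH] // Hx _.
by rewrite /= (omega_adm_adj Hxi Hx); apply: IH (omega_behead Hxi Hx) _.
Qed.

Lemma omega_extend xi h p r : inOmega V0 xi -> xi (h :: p) -> adm_adj r h ->
  exists y, (y != flip h) && xi (y :: h :: p).
Proof.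
move=> Hxi Hx Hadj; have Rx := omega_reduced Hxi Hx.
have Ef : xi (mulw [:: flip h] (h :: p)).
  by rewrite mulw_letter //= flipK eqxx (omega_behead Hxi Hx).
have Ey y : y != flip h -> xi (y :: h :: p) = xi (mulw [:: y] (h :: p)).
  by move=> hy; rewrite mulw_letter //= -flip_eq_sym (negbTE hy).
case: Hxi => _ _ _ Hloc; case: (Hloc _ Hx) => v [[hv H]|[hv [S [H1 [H2 H3]]]]].
- move: Ef; rewrite H; case: h Hx Rx Ey Hadj H => f c Hx Rx Ey Hadj H.
  case: r Hadj => e b; rewrite /flip /adm_adj /lsrc /ltgt /= => Hadj /andP[/eqP Hc /eqP Hf].
  case: c Hc Hx Rx Ey Hadj H => //= _ Hx Rx Ey Hadj H; move: Hadj.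
  case: b; first by rewrite rng_eq_src.
  move=> /and3P[/eqP Hef Hne _]; exists (e, false).
  have hy : (e, false) != (f, false).
    by apply/negP => /eqP [Eef]; move: Hne; rewrite Eef !eqxx.
  by rewrite hy /= Ey // H /= Hef Hf eqxx.
- move: Ef; rewrite H1; case: h Hx Rx Ey Hadj H1 => f c Hx Rx Ey Hadj H1.
  case: r Hadj => e b; rewrite /flip /adm_adj /lsrc /ltgt /= => Hadj /andP[/eqP Hc Hf].
  case: c Hc Hx Rx Ey Hadj H1 => //= _ Hx Rx Ey Hadj H1; move: Hadj.
  case: b; last by rewrite eq_sym rng_eq_src.
  move=> /and3P[/eqP Hef _ /= Hpb].
  have /subsetP HS := H2.
  have Hcv : pblock (sep G) e \in Cv v.
    by have := pblock_Cv e; rewrite Hef; have /HS := Hf; rewrite inE => /eqP ->.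
  have : #|S :&: pblock (sep G) e| != 0 by rewrite H3.
  rewrite cards_eq0 => /set0Pn [g]; rewrite inE => /andP[gS gX].
  have [pbg _] := Cv_pblock Hcv gX; exists (g, true).
  have hy : (g, true) != (f, true).
    by apply/negP => /eqP [Egf]; move: Hpb; rewrite -pbg Egf eqxx.
  by rewrite hy /= Ey // H1 /= gS.
Qed.

Lemma theta_behead xi c x g : inOmega V0 xi -> xi c ->
  theta c xi (x :: g) -> theta c xi g.
Proof.
move=> Hxi Hc /andP[Rxg Hg]; have Rg := reduced_behead Rxg.
rewrite /theta Rg; move: Hg; rewrite /mulw /=.
have [g1 [t [c1 [E1 E2 ->]]]] := red_cat_reduced Rg (omega_reduced Hxi Hc).
case: g1 E1 => [|y g1] E1.
  by case: Hxi => _ _ Hd _ _; have := Hd _ (size (invw t)) Hc; rewrite E2 drop_size_cat.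
move: Rxg; rewrite E1 /= => /andP[hy _]; rewrite (negbTE hy).
exact: omega_behead.
Qed.

Lemma omega_theta xi c : inOmega V0 xi -> xi c -> inOmega V0 (theta c xi).
Proof.
move=> Hxi Hc; split.
- by rewrite /theta /mulw /= red_id // (omega_reduced Hxi Hc).
- by move=> w /andP[].
- move=> w k; elim: k w => [|k IH] [|x w] //= Hxw.
  exact/IH/(theta_behead Hxi Hc Hxw).
- move=> a /andP[Ra Ha]; case: Hxi => _ _ _ Hloc.
  apply: (local_ok_ext _ (Hloc _ Ha)) => sg.
  by rewrite /theta /mulw reduced_red red_redr red_redl catA.
Qed.

Lemma theta_mulw_invw xi a w : reduced w -> theta a xi (mulw w (invw a)) = xi w.
Proof.
move=> Rw; have := red_cat_invwl w a [::]; rewrite !cats0 (red_id Rw) => Ered.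
by rewrite /theta /mulw reduced_red red_redl -catA Ered.
Qed.

(* The rightmost letter of a word is the first step of the path it encodes. *)
Definition ends_with (r : letter G) (w : word G) := (w != [::]) && (last r w == r).

Definition glue (xi1 xi2 : config G) (r : letter G) : config G :=
  fun w => if ends_with r w then xi2 w else xi1 w.

Lemma ends_with_cons r x w : ends_with r (x :: w) = if w is [::] then x == r else ends_with r w.
Proof. by case: w. Qed.

Lemma ends_with_drop r w k : ends_with r (drop k w) -> ends_with r w.
Proof.
elim: k w => [|k IH] [|x w] //= /IH; rewrite ends_with_cons; case: w {IH} => //.
Qed.

Lemma drop_ends_with r w k : ends_with r w -> drop k w != [::] -> ends_with r (drop k w).
Proof.
elim: k w => [|k IH] [|x w] //=.
by rewrite ends_with_cons; case: w IH => [|y w] IH //; apply: IH.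
Qed.

Lemma glue_omega (xi1 xi2 : config G) r : inOmega V0 xi1 -> inOmega V0 xi2 ->
  xi1 [:: r] -> xi2 [:: r] -> inOmega V0 (glue xi1 xi2 r).
Proof.
move=> [n1 R1 D1 L1] [n2 R2 D2 L2] h1 h2; split=> //.
- by move=> w; rewrite /glue; case: ifP => _; [apply: R2|apply: R1].
- move=> w k; rewrite /glue; case: ifP => Sw Hw; case: ifP => Sd.
  + exact: D2.
  + by case E: (drop k w) => [|y d] //; move: Sd; rewrite -E drop_ends_with // E.
  + by move: (ends_with_drop Sd); rewrite Sw.
  + exact: D1.
- case=> [|h a] /=.
    move=> _; apply: (local_ok_ext _ (L1 _ n1)) => sg.
    by rewrite /mulw /glue /ends_with /=; case: ifP => // /eqP ->; rewrite h1 h2.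
  rewrite /glue ends_with_cons; case: ifP => Sa Ha.
  - apply: (local_ok_ext _ (L2 _ Ha)) => sg; rewrite mulw_letter ?(R2 _ Ha) //=.
    case: ifP => _; last by rewrite ends_with_cons /= ends_with_cons Sa.
    by case: a Sa {Ha} => [|y a] Sa; [rewrite /= n1 n2 | move: Sa => /= ->].
  - apply: (local_ok_ext _ (L1 _ Ha)) => sg; rewrite mulw_letter ?(R1 _ Ha) //=.
    case: ifP => _; last by rewrite ends_with_cons /= ends_with_cons Sa.
    by case: a Sa {Ha} => [|y a] // Sa; move: Sa => /= ->.
Qed.

Definition block_rep (d1 d2 : letter G) (e : edg G) : edg G :=
  if pblock (sep G) e == pblock (sep G) d1.1 then d1.1
  else if pblock (sep G) e == pblock (sep G) d2.1 then d2.1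
  else odflt e [pick f in pblock (sep G) e].

(* A set of the shape required by local_ok containing d1 and, whenever this is
   compatible with d1, also d2. *)
Definition local_star (d1 d2 x : letter G) : bool :=
  if d1.2 then [&& x.2, rng x.1 == rng d1.1 & x.1 == block_rep d1 d2 x.1]
  else ~~ x.2 && (src x.1 == src d1.1).

Lemma block_rep_in d1 d2 e : block_rep d1 d2 e \in pblock (sep G) e.
Proof.
rewrite /block_rep; case: ifP => [/eqP ->|_]; first exact: mem_pblock_sep.
case: ifP => [/eqP ->|_]; first exact: mem_pblock_sep.
by case: pickP => [f //|_]; rewrite /= mem_pblock_sep.
Qed.

Lemma block_rep_pblock d1 d2 e f :
  pblock (sep G) e = pblock (sep G) f -> block_rep d1 d2 e = block_rep d1 d2 f.
Proof.
move=> E; rewrite /block_rep E; case: pickP => [g _ //|H].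
by have := H f; rewrite mem_pblock_sep.
Qed.

Lemma local_star_self d1 d2 : local_star d1 d2 d1.
Proof. by rewrite /local_star /block_rep; case: ifP => H; rewrite ?H /= !eqxx ?andbT. Qed.

Lemma local_star_adm_adj x h : adm_adj x h -> local_star (flip h) x x.
Proof.
case: x h => e b [f c]; rewrite /adm_adj /local_star /flip /lsrc /ltgt /=.
case: c => /=; first by case: b => /=; [rewrite rng_eq_src | case/and3P].
case: b => /=; last by rewrite eq_sym rng_eq_src.
by case/andP => -> Hpb; rewrite /block_rep /= (negbTE Hpb) !eqxx.
Qed.

Lemma local_ok_star (xi : config G) a d1 d2 :
  (forall sg, xi (mulw [:: sg] a) = local_star d1 d2 sg) -> local_ok V0 xi a.
Proof.
rewrite /local_ok; case E: d1.2 => H; last first.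
  exists (src d1.1); left; split; first by rewrite src_in_V0.
  by move=> [e b]; rewrite H /local_star E /=; case: b.
exists (rng d1.1); right; split; first exact: rng_in_V0.
exists [set e | (rng e == rng d1.1) && (e == block_rep d1 d2 e)]; split; last split.
- by move=> [e b]; rewrite H /local_star E inE /=; case: b.
- by apply/subsetP => e; rewrite !inE => /andP[->].
move=> X HX; case: (set_0Vmem X) => [X0|[x0 Hx0]].
  by move: HX; rewrite X0 /Cv inE; case/and3P: HC => _ _ /negbTE ->.
have [pbX rX] := Cv_pblock HX Hx0.
set c := block_rep d1 d2 x0.
have cin : c \in X by rewrite -pbX block_rep_in.
have [pbc rc] := Cv_pblock HX cin.
suff -> : [set e | (rng e == rng d1.1) && (e == block_rep d1 d2 e)] :&: X = [set c].
  exact: cards1.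
apply/setP => e; rewrite !inE; apply/idP/idP.
  case/andP => /andP[_ /eqP He] HeX; have [pbe _] := Cv_pblock HX HeX.
  by rewrite He; apply/eqP/block_rep_pblock; rewrite pbe pbX.
move/eqP ->; rewrite cin andbT rc eqxx /=; apply/eqP.
by apply: block_rep_pblock; rewrite pbc pbX.
Qed.

Section PathConfiguration.
Variables (z : letter G) (pi : word G).

Definition back_letter (w : word G) : letter G :=
  if w is h :: _ then flip h else last z pi.

Definition next_letter (w : word G) : letter G :=
  if (size w < size pi) && (drop (size pi - size w) pi == w)
  then nth z pi (size pi - size w).-1 else back_letter w.

(* The configuration which, at every node, continues along pi when it can. *)
Fixpoint path_config (w : word G) : bool :=
  if w is x :: w' then
    [&& path_config w', (if w' is h :: _ then h != flip x else true)
      & local_star (back_letter w') (next_letter w') x]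
  else true.

Lemma path_config_reduced w : path_config w -> reduced w.
Proof.
elim: w => [|x w IH] // Hxw; rewrite reduced_cons; case/and3P: Hxw => Hw Hn _.
by rewrite IH //; case: w {IH Hw} Hn.
Qed.

Lemma path_config_omega : inOmega V0 path_config.
Proof.
split=> //.
- exact: path_config_reduced.
- by move=> w k; elim: k w => [|k IH] [|x w] //= /and3P[Hw _ _]; apply: IH.
- move=> a Ha; apply: (local_ok_star (d1 := back_letter a) (d2 := next_letter a)) => sg.
  rewrite mulw_letter ?path_config_reduced //.
  case: a Ha => [|h a] Ha //=; case: ifP => [/eqP Eh|Hn].
    have -> : sg = flip h by rewrite Eh flipK.
    by case/and3P: Ha => Ha _ _; rewrite local_star_self; exact: Ha.
  by rewrite /=; move: Ha => /= ->; rewrite Hn.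
Qed.

Lemma path_config_suffix : admissible pi -> forall k, path_config (drop k pi).
Proof.
move=> Hadm.
have Hadj j : j.+1 < size pi -> adm_adj (nth z pi j) (nth z pi j.+1).
  by case: pi Hadm => //= p0 pr /(pathP z); apply.
suff H m : m <= size pi -> path_config (drop (size pi - m) pi).
  move=> k; case: (leqP (size pi) k) => Hk; first by rewrite drop_oversize.
  by have := H (size pi - k) (leq_subr _ _); rewrite subKn // ltnW.
elim: m => [|m IH] Hm; first by rewrite subn0 drop_size.
set k := size pi - m.+1.
have Hk : k < size pi by rewrite /k; lia.
have Ek1 : k.+1 = size pi - m by rewrite /k; lia.
rewrite (drop_nth z Hk) /= Ek1 IH ?(ltnW Hm) //=.
have -> : next_letter (drop (size pi - m) pi) = nth z pi k.
  by rewrite /next_letter size_drop subKn ?(ltnW Hm) // Hm eqxx /= -Ek1.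
case E: (drop (size pi - m) pi) => [|h w] /=.
  have Em : m = 0.
    by move/eqP: E; rewrite -size_eq0 size_drop subKn ?(ltnW Hm) // => /eqP.
  by rewrite (_ : k = (size pi).-1) ?nth_last ?local_star_self // /k Em subn1.
have Hkk : k.+1 < size pi.
  by rewrite ltnNge; apply/negP => Hc; move: E; rewrite -Ek1 drop_oversize.
have Eh : h = nth z pi k.+1 by move: E; rewrite -Ek1 (drop_nth z Hkk); case.
by rewrite Eh adm_adj_neq_flip ?local_star_adm_adj ?Hadj.
Qed.

End PathConfiguration.

Lemma glue_theta_agree (xi Phi : config G) sg p : inOmega V0 xi -> xi (sg :: p) ->
  Phi [:: sg] -> forall w, reduced w -> size w <= size (sg :: p) ->
  glue (theta p xi) Phi sg (mulw w (invw p)) = xi w.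
Proof.
move=> Hxi Hx HPhi w Rw Hsz; have Rp := omega_reduced Hxi Hx.
rewrite /glue; case: ifP => Hends; last exact: theta_mulw_invw.
have [w1 [t [c1 [E1 E2 E3]]]] := red_cat_reduced Rw (reduced_invw (reduced_behead Rp)).
move: Hends; rewrite /mulw E3; case: c1 E2 E3 => [|y c1] E2 E3.
  rewrite cats0 in E2; move/invw_inj: E2 => Ept; subst t; rewrite cats0.
  case: w1 E1 {E3} => [|y [|y' w1]] E1 //.
    by rewrite /ends_with /= => /eqP Ey; subst; rewrite HPhi Hx.
  by move: Hsz; rewrite E1 size_cat /= !addSn ltnS ltnNge leq_addl.
rewrite /ends_with last_cat /= => /andP[_ /eqP Hl].
have : last sg (invw p) = sg by rewrite E2 last_cat /= Hl.
rewrite last_invw; case: p Hx Rp E2 {E1 E3 Hsz} => [|q p] Hx Rp E2.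
  by have := congr1 size E2; rewrite size_cat /= addnS.
by move=> Eq; move: Rp; rewrite reduced_cons -Eq flipK /= eqxx andbF.
Qed.

Lemma ends_with_mulw r g X : reduced g -> reduced X -> size g < size X ->
  last r X = r -> ends_with r (mulw g X).
Proof.
move=> Rg RX Hsz Hl; rewrite /mulw; have [g1 [t [c1 [E1 E2 ->]]]] := red_cat_reduced Rg RX.
case: c1 E2 => [|y c1] E2.
  by move: Hsz; rewrite E1 E2 cats0 size_cat size_invw; lia.
rewrite /ends_with; case: g1 {E1} => [|x g1] //=; rewrite ?last_cat /=;
by rewrite -Hl E2 last_cat.
Qed.

Lemma maximal_ball_size xi n r sg p : inOmega V0 xi -> ball xi n (sg :: p) ->
  maximal (ball xi n) (sg :: p) -> adm_adj r sg -> size (sg :: p) = n.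
Proof.
move=> Hxi /andP[Hx Hsz] Hmax Hadj; apply/eqP; rewrite eqn_leq Hsz /= leqNgt.
apply/negP => Hlt; have [y /andP[hy Hy]] := omega_extend Hxi Hx Hadj.
apply: Hmax; exists y.
rewrite mulw_letter ?(omega_reduced Hxi Hx) //= -flip_eq_sym (negbTE hy).
by rewrite /ball Hy /= ltnS -ltnS.
Qed.

Lemma extend_along_path xi' sg sg' al p' : inOmega V0 xi' -> xi' (sg' :: p') ->
  admissible (flip sg :: al ++ [:: sg']) ->
  exists Phi, [/\ inOmega V0 Phi, Phi [:: sg] & forall g, reduced g ->
    size g <= size (sg' :: p') -> Phi (mulw g (invw (flip sg :: al ++ sg' :: p'))) = xi' g].
Proof.
move=> Hxi' Hx' Hadm; set pi := flip sg :: al ++ [:: sg'].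
have Hpi := path_config_suffix sg Hadm.
have Cs' : path_config sg pi [:: sg'].
  by have := Hpi (size (flip sg :: al)); rewrite /pi -cat_cons drop_size_cat.
set psi := glue (theta p' xi') (path_config sg pi) sg'.
have Hpsi : inOmega V0 psi.
  apply: glue_omega Cs'.
  - exact: omega_theta Hxi' (omega_behead Hxi' Hx').
  - exact: path_config_omega.
  - by rewrite /theta /mulw cat1s red_id ?(omega_reduced Hxi' Hx').
have ends_sg' s : ends_with sg' (s ++ [:: sg']).
  by rewrite /ends_with cats1 last_rcons eqxx andbT; case: s.
have psi_pi : psi pi by rewrite /psi /glue (ends_sg' (flip sg :: al)) -(drop0 pi).
exists (theta pi psi); split; first exact: omega_theta.
  rewrite /theta mulw_letter ?(admissible_reduced Hadm) // [cons_red _ _]/= eqxx.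
  by rewrite /psi /glue ends_sg'; have := Hpi 1; rewrite /= drop0.
move=> g Rg Hg; have -> : flip sg :: al ++ sg' :: p' = pi ++ p' by rewrite /pi /= -catA.
rewrite invw_cat -mulw_cat.
rewrite theta_mulw_invw ?reduced_red //.
exact: glue_theta_agree (path_config sg pi) sg' p' Hxi' Hx' Cs' g Rg Hg.
Qed.

Lemma translate_glue xi Phi sg p : inOmega V0 xi -> xi (sg :: p) ->
  inOmega V0 Phi -> Phi [:: sg] ->
  exists eta, [/\ inOmega V0 eta, forall w, size w <= size (sg :: p) -> eta w = xi w &
    forall u, reduced u -> ends_with sg u -> eta (mulw u p) = Phi u].
Proof.
move=> Hxi Hx HPhi Phi1; have Rp := reduced_behead (omega_reduced Hxi Hx).
set psi := glue (theta p xi) Phi sg.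
have agree w : size w <= size (sg :: p) -> theta (invw p) psi w = xi w.
  move=> Hw; rewrite /theta; case: (boolP (reduced w)) => Rw.
    exact: glue_theta_agree.
  by apply/esym/negbTE; apply: contra Rw; apply: omega_reduced.
exists (theta (invw p) psi); split=> //.
- apply: omega_theta.
    apply: glue_omega => //; first exact: omega_theta (omega_behead Hxi Hx).
    by rewrite /theta /mulw cat1s red_id ?(omega_reduced Hxi Hx).
  have := agree [::] (leq0n _); rewrite /theta /mulw /= red_id ?reduced_invw //.
  by move=> ->; case: Hxi.
- move=> u Ru Hu; rewrite /theta reduced_red mulw_cat /mulw.
  have := red_cat_invwr u p [::]; rewrite !cats0 (red_id Ru) => ->.
  by rewrite /psi /glue Hu.
Qed.

Lemma link_configurations xi xi' sg sg' al p p' : inOmega V0 xi -> inOmega V0 xi' ->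
  xi (sg :: p) -> xi' (sg' :: p') -> admissible (flip sg :: al ++ [:: sg']) ->
  exists kappa eta, [/\ inOmega V0 eta, eta kappa,
    forall w, size w <= size (sg :: p) -> eta w = xi w &
    forall g, size g <= size (sg' :: p') -> theta kappa eta g = xi' g].
Proof.
move=> Hxi Hxi' Hx Hx' Hadm.
have [Phi [HPhi Phi1 Phi_agree]] := extend_along_path Hxi' Hx' Hadm.
have [eta [Heta eta_agree eta_Phi]] := translate_glue Hxi Hx HPhi Phi1.
set X := invw (flip sg :: al ++ sg' :: p').
have RX : reduced X.
  apply/reduced_invw/admissible_reduced.
  have -> : al ++ sg' :: p' = (al ++ [:: sg']) ++ p' by rewrite -catA.
  rewrite /= cat_path; apply/andP; split=> //; rewrite last_cat /=.
  exact: omega_admissible Hxi' Hx' _.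
have agree g : size g <= size (sg' :: p') -> theta (mulw X p) eta g = xi' g.
  move=> Hg; rewrite /theta; case: (boolP (reduced g)) => Rg; last first.
    by apply/esym/negbTE; apply: contra Rg; apply: omega_reduced.
  rewrite -mulwA eta_Phi ?reduced_red ?Phi_agree //.
  apply: ends_with_mulw => //; last by rewrite /X last_invw flipK.
  by move: Hg; rewrite /X size_invw /= size_cat /=; lia.
exists (mulw X p), eta; split=> //.
have := agree [::] (leq0n _); rewrite /theta /mulw /= red_idem => ->.
by case: Hxi'.
Qed.

Lemma linking_transitive : linking_property V0 -> top_transitive V0.
Proof.
move=> HL U U' [HU HUF] [HU' HUF'] [xi Uxi] [xi' Uxi'].
have Hxi := HU _ Uxi; have Hxi' := HU' _ Uxi'.
have [F HF] := HUF _ Uxi; have [F' HF'] := HUF' _ Uxi'.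
set n := maxn 1 (\max_(w <- F ++ F') size w).
have HFn w : w \in F ++ F' -> size w <= n.
  by move=> Hw; rewrite leq_max (leq_bigmax_seq _ Hw) ?orbT.
have ball_n (zeta : config G) : inOmega V0 zeta -> is_ball V0 (ball zeta n).
  by move=> Hz; exists zeta, n; rewrite leq_maxl.
have [sg [sg' [al [[be [Bb Mb Nb Tb]] [be' [Bb' Mb' Nb' Tb'] Hadm]]]]] :=
  HL _ _ (ball_n _ Hxi) (ball_n _ Hxi').
case: be Bb Mb Nb Tb => [|h p] // Bb Mb _ /= Eh; subst h.
case: be' Bb' Mb' Nb' Tb' => [|h p'] // Bb' Mb' _ /= Eh; subst h.
have [adj adj'] := admissible_link_ends Hadm.
have En := maximal_ball_size Hxi Bb Mb adj.
have En' := maximal_ball_size Hxi' Bb' Mb' adj'.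
have [kappa [eta [Heta Hk agree agree']]] :=
  link_configurations Hxi Hxi' (andP Bb).1 (andP Bb').1 Hadm.
exists kappa, eta; split=> //.
- by apply: HF => // w Hw; rewrite agree // En HFn // mem_cat Hw.
- apply: HF' => [|w Hw]; first exact: omega_theta.
  by rewrite agree' // En' HFn // mem_cat Hw orbT.
Qed.

Lemma omega_suffix xi u v : inOmega V0 xi -> xi (u ++ v) -> xi v.
Proof. by case=> _ _ Hd _ /(Hd _ (size u)); rewrite drop_size_cat. Qed.

Lemma boundary_ball_size B xi n s b : B =1 ball xi n -> xi (s :: b) ->
  size (s :: b) = n -> boundary B s.
Proof.
move=> EB Hx Hsz; exists (s :: b); split=> //.
- by rewrite EB /ball Hx Hsz leqnn.
- case=> y [+ Hlt]; rewrite EB => /andP[_ Hle].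
  by move: (leq_trans Hlt Hle); rewrite Hsz ltnn.
Qed.

Fixpoint words_upto (k : nat) : seq (word G) :=
  if k is k'.+1 then [::] :: [seq x :: w | x <- enum {: letter G}, w <- words_upto k']
  else [:: [::]].

Lemma mem_words_upto w k : size w <= k -> w \in words_upto k.
Proof.
elim: k w => [|k IH] [|x w] //= Hw; rewrite in_cons /=.
by apply: (allpairs_f (fun x w => x :: w)); rewrite ?mem_enum ?IH.
Qed.

Lemma open_agree_upto xi k :
  Oopen V0 (fun eta => inOmega V0 eta /\ forall w, size w <= k -> eta w = xi w).
Proof.
split=> [eta [] //|eta [Heta Eeta]]; exists (words_upto k) => zeta Hz Hag.
by split=> // w Hw; rewrite Hag ?mem_words_upto // Eeta.
Qed.

Lemma perturb xi : inOmega V0 xi -> ~ isolated V0 xi -> forall F : seq (word G),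
  exists eta, [/\ inOmega V0 eta, {in F, eta =1 xi} & exists w, eta w != xi w].
Proof.
move=> Hxi Hiso F; apply: NNPP => Hn; apply: Hiso; split=> //; split=> [eta [] //|eta [Heta Eeta]].
exists F => zeta Hz Hag; split=> // w; apply/eqP/negPn/negP => Hne; apply: Hn.
exists zeta; split=> //; last by exists w.
by move=> w' Hw'; rewrite Hag // Eeta.
Qed.

Lemma perturb_away (T : eqType) (f : T -> config G) (Bs : seq T) :
  (forall xi, inOmega V0 xi -> ~ isolated V0 xi) ->
  forall xi (F : seq (word G)), inOmega V0 xi ->
  exists zeta, [/\ inOmega V0 zeta, {in F, zeta =1 xi} &
    exists K, forall b, b \in Bs -> exists w, size w <= K /\ zeta w != f b w].
Proof.
move=> Hni; elim: Bs => [|b Bs IH] xi F Hxi; first by exists xi; split=> //; exists 0.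
have [xi1 [w0 [Hxi1 Exi1 Hw0]]] : exists xi1 w0,
    [/\ inOmega V0 xi1, {in F, xi1 =1 xi} & xi1 w0 != f b w0].
  case: (classic (exists w0, xi w0 != f b w0)) => [[w0 Hw0]|Hno]; first by exists xi, w0.
  have [eta [He Hag [w Hw]]] := perturb Hxi (Hni _ Hxi) F.
  exists eta, w; split=> //; apply: contra Hw => /eqP ->.
  by rewrite eq_sym; apply/negPn/negP => Hne; apply: Hno; exists w.
have [zeta [Hz Ezeta [K HK]]] := IH xi1 (w0 :: F) Hxi1.
exists zeta; split=> //.
  by move=> w Hw; rewrite Ezeta ?in_cons ?Hw ?orbT // Exi1.
exists (maxn K (size w0)) => b'; rewrite in_cons => /orP[/eqP ->|Hb'].
  by exists w0; rewrite leq_maxr Ezeta ?mem_head.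
have [w [Hw Hne]] := HK _ Hb'.
by exists w; rewrite (leq_trans Hw (leq_maxl _ _)).
Qed.

Lemma transition_length (zeta xi' eta : config G) a K N :
  inOmega V0 eta -> eta a ->
  (forall b, size b < N -> exists w, size w <= K /\ zeta w != theta b xi' w) ->
  (forall w, size w <= K -> eta w = zeta w) ->
  (forall w, size w <= K + N -> theta a eta w = xi' w) ->
  N <= size a.
Proof.
move=> Heta Ha Hsep Eeta Etheta; rewrite leqNgt; apply/negP => Hlt.
have [|w [Hw]] := Hsep (invw a); first by rewrite size_invw.
rewrite -Eeta // /theta; apply/negP; rewrite negbK.
case: (boolP (reduced w)) => Rw; last first.
  by apply/eqP/negbTE; apply: contra Rw; apply: omega_reduced.
rewrite -Etheta ?theta_mulw_invw //.
by apply: leq_trans (size_red _) _; rewrite size_cat size_invw leq_add // ltnW.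
Qed.

Lemma long_word_link B B' xi xi' n n' eta a :
  B =1 ball xi n -> B' =1 ball xi' n' -> 0 < n -> 0 < n' ->
  inOmega V0 eta -> eta a -> n + n' <= size a ->
  (forall w, size w <= n -> eta w = xi w) ->
  (forall w, size w <= n' -> theta a eta w = xi' w) ->
  linkable (boundary B) (boundary B').
Proof.
move=> EB EB' Hn Hn' Heta Ha HN Eeta Etheta.
have Hthq : theta a eta (invw a).
  have := @theta_mulw_invw eta a [::] isT.
  by rewrite /mulw /= red_id ?reduced_invw ?(omega_reduced Heta Ha) // => ->; case: Heta.
have [x0 _] : exists x0 : letter G, true.
  by case: (a) HN => [|y s] /= H; [exfalso; lia | exists y].
set q := invw a.
set u := take n q; set m := take (size a - n - n') (drop n q); set v := drop (size a - n') q.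
have Sq : size q = size a by rewrite size_invw.
have Eq : q = u ++ m ++ v.
  rewrite /u /m /v -{1}(cat_take_drop n q); congr (_ ++ _).
  rewrite -{1}(cat_take_drop (size a - n - n') (drop n q)) drop_drop.
  by congr (_ ++ drop _ _); lia.
have Su : size u = n by rewrite size_takel // Sq; lia.
have Sv : size v = n' by rewrite size_drop Sq; lia.
have Nu : u != [::] by rewrite -size_eq0 Su -lt0n.
have Nv : v != [::] by rewrite -size_eq0 Sv -lt0n.
exists (flip (last x0 u)), (head x0 v), m; split.
- have Ea : a = invw v ++ invw m ++ invw u by rewrite -[a]invwK -/q Eq !invw_cat catA.
  have Hu : eta (invw u).
    by apply: (omega_suffix (u := invw v ++ invw m)); rewrite // -catA -Ea.
  case/lastP: u Nu Hu Su {Eq Ea} => [|u' l] // _; rewrite last_rcons.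
  rewrite /invw map_rcons rev_rcons => Hu Su.
  have Sw : size (flip l :: rev (map (@flip G) u')) = n.
    by rewrite -Su size_rcons /= size_rev size_map.
  by apply: (boundary_ball_size EB _ Sw); rewrite -Eeta ?Sw.
- have Hv : theta a eta v.
    by apply: (omega_suffix (u := u ++ m)); [exact: omega_theta | rewrite -catA -Eq].
  case: v Nv Hv Sv {Eq} => [|y v] // _ Hv Sv.
  by apply: (boundary_ball_size EB' _ Sv); rewrite -Etheta ?Sv.
- rewrite flipK; apply: admissible_link_segment => //; rewrite -Eq.
  apply: omega_admissible (omega_theta Heta Ha) Hthq _.
  by rewrite -size_eq0 Sq -lt0n; apply: leq_trans HN; rewrite addn_gt0 Hn.
Qed.

Lemma transitive_linking : (forall xi, inOmega V0 xi -> ~ isolated V0 xi) ->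
  top_transitive V0 -> linking_property V0.
Proof.
move=> Hni HT B B' [xi [n [Hxi Hn EB]]] [xi' [n' [Hxi' Hn' EB']]].
have [zeta [Hz Ezeta [K0 HK0]]] :=
  perturb_away (fun b => theta b xi') (words_upto (n + n').-1) Hni (words_upto n) Hxi.
set K := maxn K0 n.
have [a [eta [[Heta EetaK] Ha [_ EthetaK]]]] :=
  HT _ _ (open_agree_upto zeta K) (open_agree_upto xi' (K + (n + n')))
    (ex_intro _ zeta (conj Hz (fun _ _ => erefl)))
    (ex_intro _ xi' (conj Hxi' (fun _ _ => erefl))).
apply: (long_word_link EB EB' Hn Hn' Heta Ha).
- apply: (transition_length Heta Ha _ EetaK EthetaK) => b Hb.
  have [|w [Hw Hne]] := HK0 b; first by apply: mem_words_upto; lia.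
  by exists w; rewrite (leq_trans Hw (leq_maxl _ _)).
- by move=> w Hw; rewrite EetaK ?Ezeta ?mem_words_upto // (leq_trans Hw (leq_maxr _ _)).
- by move=> w Hw; rewrite EthetaK //; lia.
Qed.

End Configurations.

Theorem lemma9 (G : sgraph) (V0 : {set vtx G})
  (HC : partition (sep G) [set: edg G])
  (HCr : forall X, X \in sep G -> forall e f, e \in X -> f \in X -> rng e = rng f)
  (Hs : [set src x | x : edg G] = ~: V0)
  (Hr : [set rng x | x : edg G] = V0) :
  (linking_property V0 -> top_transitive V0) /\
  ((forall xi, inOmega V0 xi -> ~ isolated V0 xi) ->
     top_transitive V0 -> linking_property V0).
Proof.
split; first exact: linking_transitive HC HCr Hs Hr.
exact: transitive_linking HC HCr.
Qed.
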